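(* Let $R\xrightarrow{\partial}A\xrightarrow{p}B$ be a spatial fibrous preorder. For $a\in A$, put $N(a)=\{y\in B\mid aRy\}$. Let $\tau$ be the set of those $\mathcal{O}\subseteq B$ such that for every $y\in\mathcal{O}$ there is $a\in A$ with $p(a)=y$ and $N(a)\subseteq\mathcal{O}$. Then the following hold. 1. $\tau$ is a topology on $B$. 2. Let $R'\xrightarrow{\partial'}A'\xrightarrow{p'}B'$ be another spatial fibrous preorder, with topology $\tau'$ on $B'$ obtained in the same way. If $(f,f^* )$ is a fibrous morphism from the first to the second, then $f\colon(B,\tau)\to(B',\tau')$ is continuous. 3. For every $a\in A$, the set $N(a)$ belongs to $\tau$ and contains $p(a)$.
   Context: A fibrous preorder is a sequence $R\xrightarrow{\partial}A\xrightarrow{p}B$ consisting of the following data: - sets $A$ and $B$; - a map $p\colon A\to B$; - a relation $R\subseteq A\times B$ (write $aRb$ for $(a,b)\in R$); - a map $\partial\colon R\to A$. These must satisfy, for all $a\in A$ and $b,y\in B$ with $aRb$: - (F1) $p\partial(a,b)=b$; - (F2) $aRp(a)$ (this holds for all $a\in A$); - (F3) $\partial(a,b)Ry\Rightarrow aRy$. Such a fibrous preorder is called spatial if there exist maps $s\colon B\to A$ and $m\colon A\times_BA\to A$, where $A\times_BA=\{(a,a')\in A\times A\mid p(a)=p(a')\}$, such that for all $a,a'\in A$ with $p(a)=p(a')$ and all $y\in B$: - (F4) $ps(y)=y$; - (F5) $pm(a,a')=p(a)$; - (F6) $m(a,a')Ry\Rightarrow (aRy \text{ and } a'Ry)$.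 Given fibrous preorders $\mathbf{A}=(R,A,B,p,\partial)$ and $\mathbf{A}'=(R',A',B',p',\partial')$, a fibrous morphism $\mathbf{A}\to\mathbf{A}'$ is a pair $(f,f^* )$ with $f\colon B\to B'$ a map and $f^*\colon A'_f\to A$ a map, where $A'_f=\{(a',b)\in A'\times B\mid p'(a')=f(b)\}$. These must satisfy, for all $(a',b)\in A'_f$ and $y\in B$: - $pf^*(a',b)=b$; - $f^*(a',b)Ry\Rightarrow a'R'f(y)$. *)

(* A fibrous preorder R --d--> A --p--> B. The relation R ⊆ A × B is a
   Prop-valued predicate; d is defined on the subset R, i.e. on pairs
   (a,b) together with a proof that aRb. *)
Record fibrous_preorder (A B : Type) := FibrousPreorder {
  fp_p : A -> B;
  fp_R : A -> B -> Prop;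
  fp_d : {ab : A * B | fp_R (fst ab) (snd ab)} -> A;
  fp_F1 : forall (a : A) (b : B) (h : fp_R a b),
      fp_p (fp_d (exist _ (a, b) h)) = b;
  fp_F2 : forall a : A, fp_R a (fp_p a);
  fp_F3 : forall (a : A) (b y : B) (h : fp_R a b),
      fp_R (fp_d (exist _ (a, b) h)) y -> fp_R a y
}.

Arguments fp_p {A B} _ _.
Arguments fp_R {A B} _ _ _.
Arguments fp_d {A B} _ _.

Definition fiber_prod {A B : Type} (X : fibrous_preorder A B) : Type :=
  {aa : A * A | fp_p X (fst aa) = fp_p X (snd aa)}.

Definition spatial {A B : Type} (X : fibrous_preorder A B) : Prop :=
  exists (s : B -> A) (m : fiber_prod X -> A),
    (forall y : B, fp_p X (s y) = y) /\
    (forall aa : fiber_prod X, fp_p X (m aa) = fp_p X (fst (proj1_sig aa))) /\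
    (forall (aa : fiber_prod X) (y : B),
        fp_R X (m aa) y -> fp_R X (fst (proj1_sig aa)) y /\ fp_R X (snd (proj1_sig aa)) y).

Definition pullback_dom {B A' B' : Type} (X' : fibrous_preorder A' B')
  (f : B -> B') : Type :=
  {ab : A' * B | fp_p X' (fst ab) = f (snd ab)}.

Definition fibrous_morphism {A B A' B' : Type}
  (X : fibrous_preorder A B) (X' : fibrous_preorder A' B')
  (f : B -> B') (fstar : pullback_dom X' f -> A) : Prop :=
  (forall x : pullback_dom X' f, fp_p X (fstar x) = snd (proj1_sig x)) /\
  (forall (x : pullback_dom X' f) (y : B),
      fp_R X (fstar x) y -> fp_R X' (fst (proj1_sig x)) (f y)).

Definition nbhd {A B : Type} (X : fibrous_preorder A B) (a : A) : B -> Prop :=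
  fun y => fp_R X a y.

Definition tau {A B : Type} (X : fibrous_preorder A B) (O : B -> Prop) : Prop :=
  forall y : B, O y ->
    exists a : A, fp_p X a = y /\ (forall z : B, nbhd X a z -> O z).

Definition is_topology {B : Type} (T : (B -> Prop) -> Prop) : Prop :=
  T (fun _ => False) /\
  T (fun _ => True) /\
  (forall F : (B -> Prop) -> Prop,
      (forall U, F U -> T U) -> T (fun y => exists U, F U /\ U y)) /\
  (forall U V, T U -> T V -> T (fun y => U y /\ V y)).

Definition continuous {B B' : Type} (T : (B -> Prop) -> Prop)
  (T' : (B' -> Prop) -> Prop) (f : B -> B') : Prop :=
  forall U : B' -> Prop, T' U -> T (fun b => U (f b)).


(* The axioms of a
   topology split according to what they need from the fibrous preorder:
   - the empty set and unions of opens are open for any fibrous preorder;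
   - B itself is open as soon as every fibre of p is inhabited (the section s);
   - U ∩ V is open as soon as two points in one fibre have a common
     refinement in that fibre (the fibred meet m, by F6).
   Both properties follow from spatiality.  Continuity of a fibrous morphism
   (f, f^* ) pulls a witness a' over f(y) back to the witness f^*(a', y) over y;
   it uses no spatiality.  Finally N(a) is open because, for y in N(a), the
   point d(a, y) lies over y (F1) and N(d(a, y)) ⊆ N(a) (F3), and N(a)
   contains p(a) by F2. *)

Section Topology.

Variables A B : Type.
Variable X : fibrous_preorder A B.

Definition fibres_inhabited : Prop := forall y : B, exists a : A, fp_p X a = y.

Definition fibred_meets : Prop :=
  forall a1 a2 : A, fp_p X a1 = fp_p X a2 ->
    exists a : A, fp_p X a = fp_p X a1 /\
      (forall y : B, nbhd X a y -> nbhd X a1 y /\ nbhd X a2 y).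

Lemma spatial_fibres_inhabited : spatial X -> fibres_inhabited.
Proof.
  intros [s [m [Hs _]]] y. exists (s y). apply Hs.
Qed.

Lemma spatial_fibred_meets : spatial X -> fibred_meets.
Proof.
  intros [s [m [_ [Hm HmR]]]] a1 a2 e.
  exists (m (exist _ (a1, a2) e)). split.
  - apply Hm.
  - intros y Hy. exact (HmR _ y Hy).
Qed.

Lemma tau_empty : tau X (fun _ => False).
Proof.
  intros y [].
Qed.

Lemma tau_full : fibres_inhabited -> tau X (fun _ => True).
Proof.
  intros Hinh y _. destruct (Hinh y) as [a Ha].
  exists a. split; [exact Ha | intros; exact I].
Qed.

(* A witness for y in one member of the family is a witness in the union. *)
Lemma tau_union (F : (B -> Prop) -> Prop) :
  (forall U, F U -> tau X U) -> tau X (fun y => exists U, F U /\ U y).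
Proof.
  intros HF y [U [FU Uy]].
  destruct (HF U FU y Uy) as [a [Ha Na]].
  exists a. split; [exact Ha |].
  intros z Hz. exists U. split; [exact FU | exact (Na z Hz)].
Qed.

(* The common refinement of witnesses for y in U and in V is a witness in U ∩ V. *)
Lemma tau_inter (U V : B -> Prop) :
  fibred_meets -> tau X U -> tau X V -> tau X (fun y => U y /\ V y).
Proof.
  intros Hmeet HU HV y [Uy Vy].
  destruct (HU y Uy) as [a1 [H1 N1]].
  destruct (HV y Vy) as [a2 [H2 N2]].
  assert (same_fibre : fp_p X a1 = fp_p X a2) by congruence.
  destruct (Hmeet a1 a2 same_fibre) as [a [Ha Na]].
  exists a. split; [congruence |].
  intros z Hz. destruct (Na z Hz) as [Z1 Z2]. split; [exact (N1 z Z1) | exact (N2 z Z2)].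
Qed.

Lemma tau_is_topology : spatial X -> is_topology (tau X).
Proof.
  intros hX. split; [| split; [| split]].
  - exact tau_empty.
  - exact (tau_full (spatial_fibres_inhabited hX)).
  - exact tau_union.
  - intros U V. exact (tau_inter U V (spatial_fibred_meets hX)).
Qed.

(* N(a) is open: d(a, y) witnesses y (F1), and N(d(a, y)) ⊆ N(a) (F3). *)
Lemma nbhd_open (a : A) : tau X (nbhd X a).
Proof.
  intros y Hy. exists (fp_d X (exist _ (a, y) Hy)). split.
  - apply fp_F1.
  - intros z Hz. exact (fp_F3 _ _ X a y z Hy Hz).
Qed.

Lemma nbhd_center (a : A) : nbhd X a (fp_p X a).
Proof.
  apply fp_F2.
Qed.

End Topology.

(* A fibrous morphism is continuous: a witness a' for f(y) in U pulls back to
   the witness f^*(a', y) for y in f^{-1}(U). *)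
Lemma fibrous_morphism_continuous (A B A' B' : Type)
  (X : fibrous_preorder A B) (X' : fibrous_preorder A' B')
  (f : B -> B') (fstar : pullback_dom X' f -> A) :
  fibrous_morphism X X' f fstar -> continuous (tau X) (tau X') f.
Proof.
  intros [Hp HR] U HU y Uy.
  destruct (HU (f y) Uy) as [a' [Ha' Na']].
  exists (fstar (exist _ (a', y) Ha')). split.
  - apply Hp.
  - intros z Hz. exact (Na' (f z) (HR _ z Hz)).
Qed.

Theorem mainTheorem2 (A B : Type) (X : fibrous_preorder A B) (hX : spatial X) :
  is_topology (tau X) /\
  (forall (A' B' : Type) (X' : fibrous_preorder A' B'), spatial X' ->
     forall (f : B -> B') (fstar : pullback_dom X' f -> A),
       fibrous_morphism X X' f fstar ->
       continuous (tau X) (tau X') f) /\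
  (forall a : A, tau X (nbhd X a) /\ nbhd X a (fp_p X a)).
Proof.
  split; [| split].
  - exact (tau_is_topology A B X hX).
  - intros A' B' X' _ f fstar Hmor. exact (fibrous_morphism_continuous _ _ _ _ X X' f fstar Hmor).
  - intros a. split; [exact (nbhd_open A B X a) | exact (nbhd_center A B X a)].
Qed.
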